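(* Consider the multidimensional robust Bayesian persuasion setting described in the context. For every $k$, every $n_1,\dots,n_k$, and every product prior $\mu=\mu_1\times\cdots\times\mu_k$ (with $\mu_j\in\Delta([n_j])$) of full support, $\mathrm{Reg}_{\mathrm{MON\text{-}MD}}\le 1-2^{-k}$.
   Context: Setting: the state space is $\Omega=\prod_{j=1}^k [n_j]$ with a publicly known prior $\mu\in\Delta(\Omega)$ assigning positive probability to every state. A signaling scheme is a stochastic map $\pi$ from $\Omega$ to a (finite or infinite) signal set $S$; Sender commits to $\pi$, the state $\omega\sim\mu$ is drawn, a signal $s\sim\pi(\omega)$ is sent, and Receiver forms the Bayesian posterior $p(s)\in\Delta(\Omega)$. Receiver has actions $\{0,1\}$ (reject/adopt) and utility $u_r:\Omega\times\{0,1\}\to\mathbb{R}$ with $u_r(\omega,0)=0$ for all $\omega$; Receiver adopts at posterior $p$ iff $\mathbb{E}_{\omega'\sim p}[u_r(\omega',1)]\ge 0$ (ties broken in favor of adoption). Sender's utility is $u(\pi,u_r)=\Pr_s[\text{Receiver adopts at }p(s)]$, and $u^*(u_r)=\sup_\pi u(\pi,u_r)$. $\mathrm{Reg}_{\mathrm{MON\text{-}MD}}=\inf_\pi\sup_{u_r\in\mathcal{U}}\{u^*(u_r)-u(\pi,u_r)\}$, where $\mathcal{U}$ is the class of Receiver utilities such that $u_r(\cdot,1)$ is non-decreasing in each coordinate: for every $j$, every $\omega'_j\le\omega''_j$ and every $\omega_{-j}$, $u_r((\omega'_j,\omega_{-j}),1)\le u_r((\omega''_j,\omega_{-j}),1)$.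 *)

From HB Require Import structures.
From mathcomp Require Import all_boot all_order all_algebra.
From mathcomp Require Import boolp classical_sets reals.
Unset Strict Implicit. Unset Printing Implicit Defensive.
Import Order.TTheory GRing.Theory Num.Theory.
Local Open Scope ring_scope.
Local Open Scope classical_set_scope.

Section Persuasion.
Variables (R : realType) (Omega : finType).

Record scheme := Scheme {
  signal : finType;
  sch : Omega -> signal -> R;
  pi_ge0 : forall w s, 0 <= sch w s;
  pi_sum1 : forall w, \sum_(s : signal) sch w s = 1 }.

Variable mu : Omega -> R.

Definition sig_prob (P : scheme) (s : signal P) : R :=
  \sum_(w : Omega) mu w * sch P w s.

(* Bayesian posterior p(s) (meaningful when sig_prob P s > 0). *)
Definition posterior (P : scheme) (s : signal P) (w : Omega) : R :=
  mu w * sch P w s / sig_prob P s.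

(* Receiver utility u_r(.,1) =: v (u_r(.,0) = 0); adoption iff the expected
   utility of adopting under the posterior is >= 0 (ties -> adopt). *)
Definition adopts (v : Omega -> R) (P : scheme) (s : signal P) : bool :=
  0 <= \sum_(w : Omega) posterior P s w * v w.

Definition sender_util (P : scheme) (v : Omega -> R) : R :=
  \sum_(s : signal P | 0 < sig_prob P s) sig_prob P s * (adopts v P s)%:R.

Definition opt_util (v : Omega -> R) : R :=
  sup [set x : R | exists P : scheme, x = sender_util P v].

Definition regret_of (U : set (Omega -> R)) (P : scheme) : R :=
  sup [set opt_util v - sender_util P v | v in U].

Definition Reg (U : set (Omega -> R)) : R :=
  inf [set x : R | exists P : scheme, x = regret_of U P].

End Persuasion.

Definition state (k : nat) (n : 'I_k -> nat) : finType :=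
  {dffun forall j : 'I_k, 'I_(n j)}.

Definition mon_md (R : realType) (k : nat) (n : 'I_k -> nat)
  : set (state k n -> R) :=
  [set v | forall (j : 'I_k) (w1 w2 : state k n),
      (forall i : 'I_k, i != j -> w1 i = w2 i) ->
      (nat_of_ord (w1 j) <= nat_of_ord (w2 j))%N -> v w1 <= v w2].

Definition prod_prior (R : realType) (k : nat) (n : 'I_k -> nat)
  (mus : forall j : 'I_k, 'I_(n j) -> R) : state k n -> R :=
  fun w => \prod_(j : 'I_k) mus j (w j).

From HB Require Import structures.
From mathcomp Require Import all_boot all_order all_algebra.
From mathcomp Require Import boolp classical_sets reals.
From mathcomp Require Import ring lra.
Import Order.TTheory GRing.Theory Num.Theory.
Local Open Scope ring_scope.

(* Split each marginal [mu_j] into its upper half (the top half of its mass)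
   and its lower half, and let [B] be the product of the upper halves, a
   measure of mass [2^-k]. The robust scheme only reveals whether the state was
   drawn from [B]. If [E_B v >= 0], Receiver adopts on that signal, so the
   scheme earns at least [2^-k]. If [E_B v < 0], no scheme earns more than
   [1 - 2^-k]. Indeed, expand [mu] into the [2^k] products of upper and lower
   halves: as lower halves sit below upper halves, each product is dominated by
   [B] on up-sets, and the all-lower one even vanishes on every up-set that
   misses a point of the support of [B]. Hence an adoption rule [q] of mass
   [p > 1 - 2^-k] satisfies [2^-k (mu q)(U) <= p B(U)] for every up-set [U],
   and the layer-cake formula gives [2^-k E_(mu q) v <= p E_B v < 0], which
   contradicts obedience. *)

Lemma big_dffun_prod (R : comNzRingType) (I : finType) (T_ : I -> finType)
    (F : forall i, T_ i -> R) :
  \sum_(f : {dffun forall i, T_ i}) \prod_i F i (f i) =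
  \prod_i \sum_(t : T_ i) F i t.
Proof.
rewrite (reindex (@dffun_of_fprod I T_)); last exact/onW_bij/dffun_of_fprod_bij.
pose P_ i := [ffun t : T_ i => F i t].
transitivity (\sum_(f : fprod T_) \prod_(i in I) P_ i (f i)).
  by apply: eq_bigr => f _; apply: eq_bigr => i _; rewrite !ffunE.
rewrite big_fprod.
rewrite -(bigA_distr_big_dep (tagged_with T_) (fun i => untag 0 (P_ i))).
apply: eq_bigr => i _; rewrite -(big_tag (fun i t => P_ i t)).
by apply: eq_bigr => t _; rewrite ffunE.
Qed.

Lemma mon_md_le {R : realType} {k : nat} {n : 'I_k -> nat}
    (v : state k n -> R) :
  mon_md R k n v ->
  forall w1 w2 : state k n, (forall j, w1 j <= w2 j)%N -> v w1 <= v w2.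
Proof.
move=> v_mon w1 w2 le_w12.
pose t m : state k n := [ffun j : 'I_k => if (j < m)%N then w2 j else w1 j].
have t_step m (lt_mk : (m < k)%N) : v (t m) <= v (t m.+1).
  apply: (v_mon (Ordinal lt_mk)) => [i ne_im|]; rewrite !ffunE /=; last first.
    by rewrite ltnn ltnSn.
  have /negbTE ne_im' : (i : nat) != m by [].
  by rewrite ltnS (leq_eqVlt i) ne_im'.
have t_mon m : (m <= k)%N -> v (t 0%N) <= v (t m).
  elim: m => [//|m IHm] lt_mk.
  exact: le_trans (IHm (ltnW lt_mk)) (t_step m lt_mk).
have <- : t 0%N = w1 by apply/ffunP => j; rewrite ffunE.
have <- : t k = w2 by apply/ffunP => j; rewrite ffunE ltn_ord.
exact: t_mon.
Qed.

Lemma mon_md_level {R : realType} {k : nat} {n : 'I_k -> nat}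
    (v : state k n -> R) l :
  mon_md R k n v -> mon_md R k n (fun w => (l <= v w)%R%:R).
Proof.
move=> v_mon j w1 w2 eq_w12 le_w12.
case: (boolP (l <= v w1)) => // le_lv.
by rewrite (le_trans le_lv (v_mon j w1 w2 eq_w12 le_w12)).
Qed.

Lemma sum_mul_indicator {R : realType} {T : finType} (c : T -> R) (U : pred T) :
  \sum_w c w * (U w)%:R = \sum_(w | U w) c w.
Proof.
rewrite [RHS]big_mkcond; apply: eq_bigr => w _.
by case: (U w); rewrite ?mulr1 ?mulr0.
Qed.

Section LayerCake.
Context {R : realType} {T : finType}.
Variables a b : T -> R.
Hypothesis sum_ab : \sum_w a w = \sum_w b w.

Let sum_mul_le_const (u : T -> R) M : (forall w, u w <= M) ->
  (forall w, ~~ (u w < M)) -> \sum_w a w * u w <= \sum_w b w * u w.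
Proof.
move=> le_uM nlt_uM; have -> : u = fun=> M.
  by apply/funext => w; apply/eqP; rewrite eq_le le_uM leNgt nlt_uM.
by rewrite -!mulr_suml sum_ab.
Qed.

Lemma sum_mul_le_of_level_sets_card N (u : T -> R) M :
  (forall w, u w <= M) -> (#|[set w | (u w < M)%R]| <= N)%N ->
  (forall l, \sum_(w | l <= u w) a w <= \sum_(w | l <= u w) b w) ->
  \sum_w a w * u w <= \sum_w b w * u w.
Proof.
elim: N u M => [|N IHN] u M le_uM card_lt levels.
  apply: sum_mul_le_const => // w; apply/negP => lt_uM.
  move: card_lt; rewrite leqn0 cards_eq0 => /eqP/setP/(_ w).
  by rewrite !inE lt_uM.
have [w0 lt_w0|nlt_uM] := pickP (fun w => u w < M); last first.
  by apply: sum_mul_le_const => // w; rewrite nlt_uM.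
have [w1 lt_w1 max_w1] := @arg_maxP _ _ _ w0 (fun w => u w < M) u lt_w0.
set l := u w1 in lt_w1 max_w1; pose u' w := Num.min (u w) l.
(* [l] is the largest value of [u] below [M], so [u'] has one value fewer. *)
have u_split w : u w = u' w + (if M <= u w then M - l else 0).
  rewrite /u'; have [eq_uM|lt_uM] := eqVneq (u w) M.
    by rewrite eq_uM lexx min_r ?(ltW lt_w1) // addrC subrK.
  have lt_uw : u w < M by rewrite lt_neqAle lt_uM le_uM.
  by rewrite leNgt lt_uw addr0 min_l //; exact: max_w1.
have sum_split c : \sum_w c w * u w =
    \sum_w c w * u' w + (M - l) * \sum_(w | M <= u w) c w.
  rewrite (big_mkcond (fun w => M <= u w)) mulr_sumr -big_split.
  by apply: eq_bigr => w _ /=; rewrite {1}u_split; case: ifP => _; ring.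
rewrite !sum_split lerD ?ler_wpM2l ?subr_ge0 ?(ltW lt_w1) //.
apply: (IHN u' l) => [w|| t]; first by rewrite ge_min lexx orbT.
  have sub : [set w | u' w < l] \subset [set w | u w < M] :\ w1.
    apply/fintype.subsetP => w; rewrite !inE gt_min ltxx orbF => lt_ul.
    rewrite (lt_trans lt_ul lt_w1) andbT.
    by apply: contraTneq lt_ul => ->; rewrite ltxx.
  rewrite -ltnS; apply: leq_ltn_trans (subset_leq_card sub) _.
  by rewrite (cardsD1 w1) inE lt_w1 in card_lt.
have [le_tl|lt_lt] := leP t l.
  have same_level : (fun w => t <= u' w) =1 (fun w => t <= u w).
    by move=> w; rewrite le_min le_tl andbT.
  by rewrite (eq_bigl _ _ same_level) (eq_bigl _ _ same_level).
by rewrite !big_pred0 // => w; rewrite le_min (leNgt t l) lt_lt andbF.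
Qed.

Lemma sum_mul_le_of_level_sets (v : T -> R) :
  (forall l, \sum_(w | l <= v w) a w <= \sum_(w | l <= v w) b w) ->
  \sum_w a w * v w <= \sum_w b w * v w.
Proof.
apply: (sum_mul_le_of_level_sets_card #|T| v (\sum_w `|v w|)); last first.
  exact: max_card.
move=> w; apply: le_trans (ler_norm _) _.
by rewrite (bigD1 w) //= lerDl sumr_ge0.
Qed.

End LayerCake.

Section UpperHalf.
Context {R : realType} {N : nat}.
Variable mu : 'I_N -> R.
Hypothesis mu_gt0 : forall a, 0 < mu a.
Hypothesis mu_sum1 : \sum_a mu a = 1.

Definition tail_mass (i : nat) : R := \sum_(b : 'I_N | (i <= b)%N) mu b.

(* The distribution function of the top half of the mass of [mu]. *)
Definition upper_half_cdf (i : nat) : R := Num.max (2^-1 - tail_mass i) 0.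

Definition upper_half (a : 'I_N) : R := upper_half_cdf a.+1 - upper_half_cdf a.

Lemma tail_massS (a : 'I_N) : tail_mass a = mu a + tail_mass a.+1.
Proof.
rewrite /tail_mass (bigD1 a) //=; congr (_ + _); apply: eq_bigl => b.
by rewrite ltn_neqAle eq_sym -val_eqE; case: (a <= b)%N; rewrite ?andbT ?andbF.
Qed.

Lemma tail_mass_ge0 i : 0 <= tail_mass i.
Proof. by apply: sumr_ge0 => b _; exact: ltW. Qed.

Lemma tail_mass_le i j : (i <= j)%N -> tail_mass j <= tail_mass i.
Proof.
move=> le_ij; rewrite [leRHS]big_mkcond [leLHS]big_mkcond /=.
apply: ler_sum => b _; case: ifP => [le_jb|_].
  by rewrite (leq_trans le_ij le_jb).
by case: ifP => _ //; exact: ltW.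
Qed.

Lemma upper_half_ge0 a : 0 <= upper_half a.
Proof.
rewrite /upper_half /upper_half_cdf !maxElt.
by have := tail_massS a; have := mu_gt0 a; do 2 case: ifP => ?; lra.
Qed.

Lemma upper_half_le a : upper_half a <= mu a.
Proof.
rewrite /upper_half /upper_half_cdf !maxElt.
have := tail_massS a; have := mu_gt0 a; have := tail_mass_ge0 a.+1.
by do 2 case: ifP => ?; lra.
Qed.

Lemma sum_upper_half : \sum_a upper_half a = 2^-1.
Proof.
rewrite -(big_mkord xpredT (fun i => upper_half_cdf i.+1 - upper_half_cdf i)).
rewrite telescope_sumr // /upper_half_cdf.
have -> : tail_mass N = 0.
  by rewrite /tail_mass big_pred0 // => b; rewrite leqNgt ltn_ord.
have -> : tail_mass 0 = 1 by rewrite /tail_mass -mu_sum1; apply: eq_bigl.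
by rewrite !maxElt; do 2 case: ifP => ?; lra.
Qed.

Lemma upper_half_sep a b :
  0 < upper_half a -> upper_half b < mu b -> (b <= a)%N.
Proof.
move=> ga_gt0 gb_lt; rewrite leqNgt; apply/negP => lt_ab.
have := tail_mass_le _ _ lt_ab; have := tail_massS b; have := mu_gt0 b.
move: ga_gt0 gb_lt; rewrite /upper_half /upper_half_cdf !maxElt.
by do 4 case: ifP => ?; lra.
Qed.

End UpperHalf.

Section ProductWeights.
Context {R : realType} {k : nat} {n : 'I_k -> nat}.
Implicit Types (F H : forall j : 'I_k, 'I_(n j) -> R) (S : {ffun 'I_k -> bool}).
Local Notation state := (state k n).
Local Notation pw := (prod_prior R k n).

Lemma sum_prod_prior F : \sum_(w : state) pw F w = \prod_j \sum_a F j a.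
Proof. exact: big_dffun_prod. Qed.

Lemma prod_prior_ge0 F w : (forall j a, 0 <= F j a) -> 0 <= pw F w.
Proof. by move=> F_ge0; apply: prodr_ge0 => j _. Qed.

Lemma prod_prior_gt0P F w : (forall j a, 0 <= F j a) ->
  0 < pw F w -> forall j, 0 < F j (w j).
Proof.
move=> F_ge0 pw_gt0 j; rewrite lt0r F_ge0 andbT.
by move: pw_gt0; rewrite lt0r => /andP[/prodf_neq0/(_ j isT)].
Qed.

Definition switch S F H (j : 'I_k) : 'I_(n j) -> R := if S j then F j else H j.

Definition mix S (x y : state) : state := [ffun j => if S j then y j else x j].

Lemma prod_prior_addE F H w :
  pw (fun j a => F j a + H j a) w = \sum_S pw (switch S F H) w.
Proof.
have sum_bool j : F j (w j) + H j (w j) =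
    \sum_(b : bool) if b then F j (w j) else H j (w j) by rewrite big_bool.
rewrite /prod_prior (eq_bigr _ (fun j _ => sum_bool j)) bigA_distr_bigA.
by apply: eq_bigr => S _; apply: eq_bigr => j _; rewrite /switch; case: (S j).
Qed.

(* Fubini along the involution (x, y) |-> (mix S x y, mix S y x). *)
Lemma sum_prod_prior_mix S F H (f : state -> R) :
  \sum_x \sum_y pw F x * pw H y * f (mix S x y) =
  (\prod_j \sum_a switch S F H j a) * \sum_z pw (switch S H F) z * f z.
Proof.
pose psi (p : state * state) := (mix S p.1 p.2, mix S p.2 p.1).
have psiK : involutive psi.
  by move=> [x y]; congr pair; apply/ffunP => j; rewrite !ffunE; case: (S j).
rewrite pair_bigA (reindex_inj (inv_inj psiK)) /=.
rewrite -(pair_bigA _ (fun z x => pw F (mix S z x) * pw H (mix S x z) *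
  f (mix S (mix S z x) (mix S x z)))) /= -sum_prod_prior mulr_sumr.
apply: eq_bigr => z _; rewrite mulr_suml; apply: eq_bigr => x _.
have -> : mix S (mix S z x) (mix S x z) = z.
  by apply/ffunP => j; rewrite !ffunE; case: (S j).
rewrite mulrA; congr (_ * _); rewrite /prod_prior -!big_split /=.
apply: eq_bigr => j _.
by rewrite /switch !ffunE; case: (S j); rewrite // mulrC.
Qed.

End ProductWeights.

Section Signaling.
Local Open Scope classical_set_scope.
Context {R : realType} {Omega : finType}.
Variable mu : Omega -> R.
Local Notation scheme := (scheme R Omega).
Local Notation sig_prob := (sig_prob R Omega mu).
Local Notation adopts := (adopts R Omega mu).
Local Notation sender_util := (sender_util R Omega mu).
Local Notation opt_util := (opt_util R Omega mu).
Local Notation regret_of := (regret_of R Omega mu).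

Definition adopt_prob (P : scheme) (v : Omega -> R) (w : Omega) : R :=
  \sum_(s | (0 < sig_prob P s) && adopts v P s) sch R Omega P w s.

Lemma adopt_prob_ge0 P v w : 0 <= adopt_prob P v w.
Proof. by apply: sumr_ge0 => s _; exact: pi_ge0. Qed.

Lemma adopt_prob_le1 P v w : adopt_prob P v w <= 1.
Proof.
rewrite -(pi_sum1 R Omega P w).
rewrite [leRHS](bigID (fun s => (0 < sig_prob P s) && adopts v P s)) /=.
by rewrite lerDl sumr_ge0 // => s _; exact: pi_ge0.
Qed.

Lemma sender_utilE P v : sender_util P v = \sum_w mu w * adopt_prob P v w.
Proof.
under [RHS]eq_bigr do rewrite mulr_sumr.
rewrite [RHS]exchange_big big_mkcondr /=; apply: eq_bigr => s _.
by case: (adopts v P s); rewrite ?mulr1 ?mulr0.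
Qed.

(* Every adopted signal has a nonnegative posterior expectation of [v]. *)
Lemma adopt_prob_obedient P v : 0 <= \sum_w mu w * adopt_prob P v w * v w.
Proof.
under eq_bigr do rewrite mulr_sumr mulr_suml.
rewrite exchange_big /=; apply: sumr_ge0 => s /andP[sig_gt0 adopt_s].
have -> : \sum_w mu w * sch R Omega P w s * v w =
    sig_prob P s * \sum_w posterior R Omega mu P s w * v w.
  rewrite mulr_sumr; apply: eq_bigr => w _; rewrite /posterior.
  by field; exact: lt0r_neq0.
exact: mulr_ge0 (ltW sig_gt0) adopt_s.
Qed.

Section Normalized.
Hypothesis mu_ge0 : forall w, 0 <= mu w.
Hypothesis mu_sum1 : \sum_w mu w = 1.

Lemma sender_util_ge0 P v : 0 <= sender_util P v.
Proof.
by rewrite sender_utilE sumr_ge0 // => w _; rewrite mulr_ge0 ?adopt_prob_ge0.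
Qed.

Lemma sender_util_le1 P v : sender_util P v <= 1.
Proof.
rewrite sender_utilE -mu_sum1 ler_sum // => w _.
by rewrite ler_piMr ?adopt_prob_le1.
Qed.

Lemma sender_util_le_opt P v : sender_util P v <= opt_util v.
Proof.
by apply: ub_le_sup; [exists 1 => _ [Q ->]; exact: sender_util_le1 | exists P].
Qed.

Lemma regret_ofP (U : set (Omega -> R)) (P : scheme) (r : R) : U !=set0 ->
  (forall v, U v -> forall Q, sender_util Q v <= r + sender_util P v) ->
  regret_of U P <= r.
Proof.
move=> [v0 Uv0] cmp; apply: ge_sup.
  by exists (opt_util v0 - sender_util P v0), v0.
move=> _ [v Uv <-]; rewrite lerBlDr; apply: ge_sup.
  by exists (sender_util P v), P.
by move=> _ [Q ->]; exact: cmp.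
Qed.

Lemma Reg_le_regret (U : set (Omega -> R)) (P : scheme) : U !=set0 ->
  Reg R Omega mu U <= regret_of U P.
Proof.
move=> [v0 Uv0]; apply: ge_inf; last by exists P.
exists 0 => _ [Q ->]; apply: le_trans (_ : opt_util v0 - sender_util Q v0 <= _).
  by rewrite subr_ge0 sender_util_le_opt.
apply: ub_le_sup; last by exists v0.
exists 1 => _ [v _ <-]; rewrite lerBlDr; apply: ge_sup.
  by exists (sender_util Q v), Q.
move=> _ [Q' ->]; apply: le_trans (sender_util_le1 Q' v) _.
by rewrite lerDl sender_util_ge0.
Qed.

End Normalized.

Lemma bool_scheme_ge0 {h : Omega -> R} (h01 : forall w, 0 <= h w <= 1)
    w (b : bool) :
  0 <= (if b then h w else 1 - h w).
Proof. by case: b (h01 w) => /andP[h_ge0 h_le1]; rewrite ?subr_ge0. Qed.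

Lemma bool_scheme_sum1 (h : Omega -> R) w :
  \sum_(b : bool) (if b then h w else 1 - h w) = 1.
Proof. by rewrite big_bool /= addrC subrK. Qed.

Definition bool_scheme {h : Omega -> R} (h01 : forall w, 0 <= h w <= 1) :
    scheme :=
  Scheme R Omega bool (fun w b => if b then h w else 1 - h w)
    (bool_scheme_ge0 h01) (bool_scheme_sum1 h).

Lemma bool_scheme_util_ge (h : Omega -> R) (h01 : forall w, 0 <= h w <= 1) v :
  0 < \sum_w mu w * h w -> 0 <= \sum_w mu w * h w * v w ->
  \sum_w mu w * h w <= sender_util (bool_scheme h01) v.
Proof.
move=> p_gt0 hv_ge0.
have sig_true : sig_prob (bool_scheme h01) true = \sum_w mu w * h w by [].
have adopt_true : adopts v (bool_scheme h01) true.
  rewrite /adopts /posterior sig_true; under eq_bigr do rewrite mulrAC.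
  by rewrite -mulr_suml mulr_ge0 // invr_ge0 ltW.
rewrite /sender_util [leRHS]big_mkcond big_bool /= sig_true p_gt0 adopt_true.
rewrite mulr1 lerDl.
by case: ifP => // sig_gt0; rewrite mulr_ge0 ?ler0n ?ltW.
Qed.

End Signaling.

Section ProductOfHalves.
Context {R : realType} {k : nat} {n : 'I_k -> nat}.
Variable mus : forall j : 'I_k, 'I_(n j) -> R.
Hypothesis mus_gt0 : forall j a, 0 < mus j a.
Hypothesis mus_sum1 : forall j, \sum_a mus j a = 1.

Local Notation state := (state k n).
Local Notation pw := (prod_prior R k n).
Local Notation mu := (pw mus).

Let upper j : 'I_(n j) -> R := upper_half (mus j).
Let lower j a : R := mus j a - upper j a.
Local Notation B := (pw upper).
Local Notation G := (pw lower).

Lemma prior_ge0 w : 0 <= mu w.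
Proof. by apply: prod_prior_ge0 => j a; exact: ltW. Qed.

Lemma prior_sum1 : \sum_w mu w = 1.
Proof. by rewrite sum_prod_prior big1. Qed.

Let upper_ge0 j a : 0 <= upper j a.
Proof. exact: upper_half_ge0. Qed.

Let lower_ge0 j a : 0 <= lower j a.
Proof. by rewrite subr_ge0; exact: upper_half_le. Qed.

Let sum_upper j : \sum_a upper j a = 2^-1.
Proof. exact: sum_upper_half. Qed.

Let sum_lower j : \sum_a lower j a = 2^-1.
Proof. by rewrite sumrB mus_sum1 sum_upper; lra. Qed.

Let lower_le_upper {j a b} : 0 < lower j a -> 0 < upper j b -> (a <= b)%N.
Proof. by rewrite subr_gt0 => lt_a gt_b; exact: upper_half_sep. Qed.

Let prod_half : \prod_(j < k) 2^-1 = 2%:R ^- k :> R.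
Proof. by rewrite prodr_const card_ord exprVn. Qed.

Let sum_B : \sum_w B w = 2%:R ^- k.
Proof.
by rewrite sum_prod_prior -prod_half; apply: eq_bigr => j _; exact: sum_upper.
Qed.

Let sum_G : \sum_w G w = 2%:R ^- k.
Proof.
by rewrite sum_prod_prior -prod_half; apply: eq_bigr => j _; exact: sum_lower.
Qed.

Let half_k_gt0 : 0 < 2%:R ^- k :> R.
Proof. by rewrite invr_gt0 exprn_gt0. Qed.

(* Couple [x ~ G] with [y ~ B]: [mix S x y] follows [switch S upper lower]
   and lies below [y]. *)
Lemma sum_switch_mul_le (S : {ffun 'I_k -> bool}) (u : state -> R) :
  mon_md R k n u ->
  \sum_z pw (switch S upper lower) z * u z <= \sum_z B z * u z.
Proof.
move=> u_mon; rewrite -(ler_pM2l half_k_gt0).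
have factor : \prod_j \sum_a switch S lower upper j a = 2%:R ^- k.
  by rewrite -prod_half; apply: eq_bigr => j _; rewrite /switch; case: (S j).
rewrite -{1}factor -sum_prod_prior_mix -sum_G mulr_suml.
apply: ler_sum => x _; rewrite mulr_sumr; apply: ler_sum => y _.
have [->|Gx_ne0] := eqVneq (G x) 0; first by rewrite !mul0r.
have [->|By_ne0] := eqVneq (B y) 0; first by rewrite !(mulr0, mul0r).
have Gx_gt0 : 0 < G x by rewrite lt0r Gx_ne0 prod_prior_ge0.
have By_gt0 : 0 < B y by rewrite lt0r By_ne0 prod_prior_ge0.
rewrite -mulrA !ler_wpM2l ?prod_prior_ge0 //.
apply: mon_md_le => // j; rewrite ffunE; case: (S j) => //.
exact: lower_le_upper (prod_prior_gt0P _ _ lower_ge0 Gx_gt0 j)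
  (prod_prior_gt0P _ _ upper_ge0 By_gt0 j).
Qed.

Lemma sum_lower_mul_le0 (u : state -> R) w0 : mon_md R k n u ->
  u w0 <= 0 -> 0 < B w0 -> \sum_z G z * u z <= 0.
Proof.
move=> u_mon u_w0 B_w0; apply: sumr_le0 => z _.
have [->|Gz_ne0] := eqVneq (G z) 0; first by rewrite mul0r.
have Gz_gt0 : 0 < G z by rewrite lt0r Gz_ne0 prod_prior_ge0.
rewrite pmulr_rle0 //; apply: le_trans u_w0; apply: mon_md_le => // j.
exact: lower_le_upper (prod_prior_gt0P _ _ lower_ge0 Gz_gt0 j)
  (prod_prior_gt0P _ _ upper_ge0 B_w0 j).
Qed.

(* Expand [mu = prod_j (upper j + lower j)] into [2^k] products of halves. *)
Lemma sum_prior_mul_le (u : state -> R) w0 : mon_md R k n u ->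
  u w0 <= 0 -> 0 < B w0 ->
  \sum_w mu w * u w <= (2%:R ^+ k - 1) * \sum_w B w * u w.
Proof.
move=> u_mon u_w0 B_w0.
have mu_split w : mu w = \sum_S pw (switch S upper lower) w.
  rewrite -prod_prior_addE; apply: eq_bigr => j _.
  by rewrite /lower addrC subrK.
under eq_bigr do rewrite mu_split mulr_suml.
rewrite exchange_big (bigD1 [ffun => false]) //= -[leRHS]add0r lerD //.
  have switch0 z : pw (switch [ffun => false] upper lower) z = G z.
    by apply: eq_bigr => j _; rewrite /switch ffunE.
  under eq_bigr do rewrite switch0.
  exact: sum_lower_mul_le0 u_mon u_w0 B_w0.
apply: (@le_trans _ _ (\sum_(S | S != [ffun => false]) \sum_z B z * u z)).
  by apply: ler_sum => S _; exact: sum_switch_mul_le.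
rewrite sumr_const cardC1 card_ffun card_bool card_ord.
by rewrite -subn1 -[leLHS]mulr_natl natrB ?expn_gt0 // natrX.
Qed.

Lemma upper_set_mass_le (q : state -> R) (U : pred state) :
  mon_md R k n (fun w => (U w)%:R) -> (forall w, 0 <= q w <= 1) ->
  1 - 2%:R ^- k < \sum_w mu w * q w ->
  2%:R ^- k * \sum_(w | U w) mu w * q w <=
    (\sum_w mu w * q w) * \sum_(w | U w) B w.
Proof.
move=> U_mon q01 p_gt; set p := \sum_w mu w * q w in p_gt *.
have B_ge0 w : 0 <= B w by exact: prod_prior_ge0.
have [w0 /andP[B_w0 notU_w0]|B_in_U] := pickP (fun w => (0 < B w) && ~~ U w).
  have U_w0 : (U w0)%:R <= 0 :> R by rewrite (negbTE notU_w0).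
  have := sum_prior_mul_le _ _ U_mon U_w0 B_w0.
  rewrite !sum_mul_indicator => mass_U.
  have muq_U : \sum_(w | U w) mu w * q w <= \sum_(w | U w) mu w.
    apply: ler_sum => w _.
    by rewrite ler_piMr ?prior_ge0 //; case/andP: (q01 w).
  have B_U_ge0 : 0 <= \sum_(w | U w) B w by exact: sumr_ge0.
  apply: le_trans (_ : (1 - 2%:R ^- k) * \sum_(w | U w) B w <= _); last first.
    by rewrite ler_wpM2r // ltW.
  have -> : 1 - 2%:R ^- k = 2%:R ^- k * (2%:R ^+ k - 1) :> R.
    by rewrite mulrBr mulVf ?expf_neq0 ?pnatr_eq0 // mulr1.
  by rewrite -mulrA ler_pM2l //; exact: le_trans muq_U mass_U.
have sum_B_U : \sum_(w | U w) B w = 2%:R ^- k.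
  rewrite -sum_B [RHS](bigID U) /= [X in _ + X]big1 ?addr0 // => w notU_w.
  by move: (B_in_U w); rewrite notU_w andbT lt0r (B_ge0 w) andbT => /negbFE/eqP.
rewrite sum_B_U mulrC ler_pM2r // /p [leRHS](bigID U) /= lerDl.
by apply: sumr_ge0 => w _; rewrite mulr_ge0 ?prior_ge0 //; case/andP: (q01 w).
Qed.

Lemma adoption_mass_le (q v : state -> R) : mon_md R k n v ->
  (forall w, 0 <= q w <= 1) -> 0 <= \sum_w mu w * q w * v w ->
  \sum_w B w * v w < 0 -> \sum_w mu w * q w <= 1 - 2%:R ^- k.
Proof.
move=> v_mon q01 obedient Bv_lt0; rewrite leNgt; apply/negP => p_gt.
set p := \sum_w mu w * q w in p_gt.
have p_gt0 : 0 < p.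
  apply: le_lt_trans p_gt.
  by rewrite subr_ge0 invf_le1 ?exprn_gt0 // exprn_ege1 ?ler1n.
have dominated : 2%:R ^- k * \sum_w mu w * q w * v w <= p * \sum_w B w * v w.
  rewrite !mulr_sumr; under eq_bigr do rewrite mulrA.
  under [leRHS]eq_bigr do rewrite mulrA.
  apply: (sum_mul_le_of_level_sets (fun w => 2%:R ^- k * (mu w * q w))
    (fun w => p * B w)).
    by rewrite -!mulr_sumr sum_B mulrC.
  move=> l; rewrite -!mulr_sumr.
  exact: upper_set_mass_le _ _ (mon_md_level _ l v_mon) q01 p_gt.
have := mulr_ge0 (ltW half_k_gt0) obedient.
have : p * \sum_w B w * v w < 0 by rewrite pmulr_rlt0.
lra.
Qed.

Definition upper_ratio (w : state) : R := B w / mu w.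

Lemma upper_ratio01 w : 0 <= upper_ratio w <= 1.
Proof.
have mu_gt0 : 0 < mu w by apply: prodr_gt0 => j _.
rewrite /upper_ratio divr_ge0 ?prior_ge0 ?prod_prior_ge0 //=.
rewrite ler_pdivrMr // mul1r.
by apply: ler_prod => j _; rewrite upper_ge0 upper_half_le.
Qed.

Definition upper_scheme : scheme R state := bool_scheme upper_ratio01.

Lemma sender_util_le_upper_scheme (v : state -> R) (Q : scheme R state) :
  mon_md R k n v ->
  sender_util R state mu Q v <=
    (1 - 2%:R ^- k) + sender_util R state mu upper_scheme v.
Proof.
move=> v_mon.
have [Bv_lt0|Bv_ge0] := ltP (\sum_w B w * v w) 0.
  apply: ler_wpDr; first exact: (sender_util_ge0 _ prior_ge0 upper_scheme v).
  rewrite sender_utilE.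
  apply: (adoption_mass_le _ _ v_mon _ (adopt_prob_obedient mu Q v) Bv_lt0).
  by move=> w; rewrite adopt_prob_ge0 adopt_prob_le1.
have muh w : mu w * upper_ratio w = B w.
  by rewrite /upper_ratio mulrC divfK // gt_eqF //; apply: prodr_gt0 => j _.
have := bool_scheme_util_ge mu _ upper_ratio01 v.
rewrite (eq_bigr _ (fun w _ => muh w)) sum_B.
under [X in _ -> 0 <= X -> _]eq_bigr do rewrite muh.
move=> /(_ half_k_gt0 Bv_ge0); rewrite -/upper_scheme.
have := sender_util_le1 _ prior_ge0 prior_sum1 Q v; lra.
Qed.

End ProductOfHalves.

Theorem proposition3 (R : realType) (k : nat) (n : 'I_k -> nat)
  (mus : forall j : 'I_k, 'I_(n j) -> R)
  (mus_pos : forall (j : 'I_k) (a : 'I_(n j)), 0 < mus j a)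
  (mus_sum1 : forall j : 'I_k, \sum_(a : 'I_(n j)) mus j a = 1) :
  Reg R (state k n) (prod_prior R k n mus) (mon_md R k n) <= 1 - 2%:R ^- k.
Proof.
have mon_md_nonempty : (mon_md R k n !=set0)%classic by exists (fun=> 0).
apply: le_trans (Reg_le_regret _ (prior_ge0 mus mus_pos) (prior_sum1 mus mus_sum1)
  _ (upper_scheme mus mus_pos) mon_md_nonempty) _.
apply: regret_ofP mon_md_nonempty _ => v v_mon Q.
exact: sender_util_le_upper_scheme.
Qed.
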